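(* Let $n$ be a positive integer. Then $\mathsf{QNAADT}(\mathsf{OMB}_n) = \Omega(n)$.
   Context: $\mathsf{OMB}_n:\{0,1\}^n\to\{0,1\}$ is defined by $\mathsf{OMB}_n(x)=1$ if $\max\{i\in[n]:x_i=0\}$ is odd and $0$ otherwise, with $\mathsf{OMB}_n(1^n)=0$. $\mathsf{AND}_S(x)=\prod_{i\in S}x_i$. A quantum non-adaptive AND decision tree of cost $c$ works on a state space $|S_1,\dots,S_c\rangle|b\rangle|w\rangle$ with $S_j\subseteq[n]$, $b\in\{0,1\}^c$ and an arbitrary workspace; it starts from an input-independent state $|\psi\rangle$, applies the oracle $O_x:|S_1,\dots,S_c\rangle|b_1,\dots,b_c\rangle|w\rangle\mapsto|S_1,\dots,S_c\rangle|b_1\oplus\mathsf{AND}_{S_1}(x),\dots,b_c\oplus\mathsf{AND}_{S_c}(x)\rangle|w\rangle$ once, and accepts with probability $\|\Pi O_x|\psi\rangle\|^2$ for a fixed projector $\Pi$. $\mathsf{QNAADT}(f)$ is the minimum cost of such a tree outputting $f(x)$ correctly with probability at least $2/3$ for every $x$. *)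

From HB Require Import structures.
From mathcomp Require Import all_boot all_order all_algebra.
From mathcomp Require Import complex.
From mathcomp Require Import Rstruct.
Set Implicit Arguments. Unset Strict Implicit. Unset Printing Implicit Defensive.
Import Order.TTheory GRing.Theory Num.Theory.
Local Open Scope ring_scope.

Definition C : numClosedFieldType := (Rdefinitions.R)[i].

(* Inputs x in {0,1}^n; coordinate i : 'I_n stands for position i+1 in [n]. *)
Definition input n := {ffun 'I_n -> bool}.

(* OMB_n(x) = 1 iff max{ i in [n] : x_i = 0 } is odd (1-indexed);
   OMB_n(1^n) = 0.  With 0-indexed positions, 1-indexed position is i.+1. *)
Definition OMB (n : nat) (x : input n) : bool :=
  let Z := [set i : 'I_n | ~~ x i] in
  if Z == set0 then false else odd (\max_(i in Z) (nat_of_ord i)).+1.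

Definition ANDS (n : nat) (S : {set 'I_n}) (x : input n) : bool :=
  [forall i in S, x i].

(* Basis of the state space |S_1,...,S_c>|b_1,...,b_c>|w>, workspace of
   dimension m. *)
Definition basis (n c m : nat) : finType :=
  ({ffun 'I_c -> {set 'I_n}} * {ffun 'I_c -> bool} * 'I_m)%type.

Definition qvec (n c m : nat) := basis n c m -> C.

Definition sqnorm (n c m : nat) (v : qvec n c m) : C :=
  \sum_(k : basis n c m) `|v k| ^+ 2.

Definition oracle_basis (n c m : nat) (x : input n) (k : basis n c m)
  : basis n c m :=
  let: (Ss, bs, w) := k in
  (Ss, [ffun j => bs j (+) ANDS (Ss j) x], w).

(* Its linear extension: (O_x v)(k) = v(O_x^{-1} k) = v(O_x k), as O_x is an
   involution on basis states. *)
Definition oracle (n c m : nat) (x : input n) (v : qvec n c m) : qvec n c m :=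
  fun k => v (oracle_basis x k).

(* Orthogonal projector Pi (Hermitian and idempotent), given by its matrix
   entries in the standard basis. *)
Definition is_projector (n c m : nat) (P : basis n c m -> basis n c m -> C)
  : Prop :=
  (forall i j, P i j = (P j i)^*) /\
  (forall i j, \sum_k P i k * P k j = P i j).

Definition apply_op (n c m : nat) (P : basis n c m -> basis n c m -> C)
  (v : qvec n c m) : qvec n c m :=
  fun i => \sum_j P i j * v j.

Definition accept_prob (n c m : nat) (psi : qvec n c m)
  (P : basis n c m -> basis n c m -> C) (x : input n) : C :=
  sqnorm (apply_op P (oracle x psi)).

Definition qnaadt_computes (n c m : nat) (f : input n -> bool)
  (psi : qvec n c m) (P : basis n c m -> basis n c m -> C) : Prop :=
  sqnorm psi = 1 /\ is_projector P /\
  forall x : input n,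
    if f x then 2%:R / 3%:R <= accept_prob psi P x
    else 1 - accept_prob psi P x >= 2%:R / 3%:R.

(* There is a quantum non-adaptive AND decision tree of cost c computing f
   (with some finite workspace). QNAADT(f) is the least such c. *)
Definition QNAADT_le (n : nat) (f : input n -> bool) (c : nat) : Prop :=
  exists (m : nat) (psi : qvec n c m) (P : basis n c m -> basis n c m -> C),
    qnaadt_computes f psi P.

From mathcomp Require Import all_boot all_order all_algebra.
From mathcomp Require Import complex Rstruct ring.
Set Implicit Arguments. Unset Strict Implicit. Unset Printing Implicit Defensive.
Import Order.TTheory GRing.Theory Num.Theory.
Local Open Scope ring_scope.

(* The inputs z_j = 0^j 1^(n-j), j = 0..n, alternate in OMB_n, so a tree
   computing OMB_n with error 1/3 must send consecutive inputs z_j, z_(j+1) to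
   final states O_(z_j) psi, O_(z_(j+1)) psi at squared distance at least 1/18.
   On the other hand AND_S(z_j) and AND_S(z_(j+1)) differ only when j is the
   least element of S, so O_(z_j) and O_(z_(j+1)) differ only on basis states
   one of whose c query sets has least element j.  Each basis state is thus
   charged for at most c indices j, and the n squared distances sum to at
   most 4c.  Hence n <= 72 c. *)

Definition zero_prefix n j : input n := [ffun i : 'I_n => (j <= i)%N].

Lemma OMB_zero_prefix n j : (j <= n)%N -> OMB (zero_prefix n j) = odd j.
Proof.
move=> le_jn; rewrite /OMB.
have -> : [set i : 'I_n | ~~ zero_prefix n j i] = [set i : 'I_n | (i < j)%N].
  by apply/setP => i; rewrite !inE ffunE -ltnNge.
case: j le_jn => [|j] lt_jn.
  have -> : [set i : 'I_n | (i < 0)%N] = set0 by apply/setP => i; rewrite !inE.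
  by rewrite eqxx.
set Z := [set i : 'I_n | (i < j.+1)%N].
have jZ : Ordinal lt_jn \in Z by rewrite inE /=.
have -> : (Z == set0) = false by apply/negbTE/set0Pn; exists (Ordinal lt_jn).
suff -> : \max_(i in Z) nat_of_ord i = j by [].
apply/anti_leq/andP; split; first by apply/bigmax_leqP => i; rewrite inE.
exact: (leq_bigmax_cond _ jZ).
Qed.

Lemma ANDS_zero_prefix n (S : {set 'I_n}) j :
  ANDS S (zero_prefix n j) = [forall l in S, (j <= l)%N].
Proof. by apply: eq_forallb => l /=; rewrite ffunE. Qed.

Definition least_in n (S : {set 'I_n}) (j : 'I_n) :=
  (j \in S) && [forall l in S, (j <= l)%N].

Lemma ANDS_zero_prefix_flip n (S : {set 'I_n}) (j : 'I_n) :
  ANDS S (zero_prefix n j.+1) != ANDS S (zero_prefix n j) -> least_in S j.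
Proof.
rewrite !ANDS_zero_prefix /least_in.
have [le_jS|/negP le_jNS] := boolP [forall l in S, (j <= l)%N]; last first.
  rewrite andbF eqbF_neg negbK => /forall_inP lt_jS.
  by case: le_jNS; apply/forall_inP => l /lt_jS /ltnW.
rewrite andbT; apply: contraR => jNS; rewrite eqb_id.
apply/forall_inP => l lS; rewrite ltn_neqAle (forall_inP le_jS l lS) andbT.
by apply: contraNN jNS => /eqP/val_inj->.
Qed.

Lemma sum_least_in_le1 n (S : {set 'I_n}) : (\sum_(j < n) least_in S j <= 1)%N.
Proof.
have [j0 j0_least|no_least] := pickP (least_in S); last first.
  by rewrite big1 // => j _; rewrite no_least.
rewrite (bigD1 j0) //= j0_least big1 // => j neq_jj0.
apply/eqP; rewrite eqb0; apply: contraNN neq_jj0 => /andP[jS le_jS].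
case/andP: j0_least => j0S le_j0S.
by apply/eqP/val_inj/anti_leq; rewrite (forall_inP le_jS) ?(forall_inP le_j0S).
Qed.

Definition distinguishes n c (Ss : {ffun 'I_c -> {set 'I_n}}) (j : 'I_n) :=
  [exists i, ANDS (Ss i) (zero_prefix n j.+1) != ANDS (Ss i) (zero_prefix n j)].

Lemma sum_distinguishes_le n c (Ss : {ffun 'I_c -> {set 'I_n}}) :
  (\sum_(j < n) distinguishes Ss j <= c)%N.
Proof.
apply: (@leq_trans (\sum_(j < n) \sum_(i < c) least_in (Ss i) j)).
  apply: leq_sum => j _; case: (boolP (distinguishes Ss j)) => // /existsP[i flip].
  by rewrite (bigD1 i) //= (ANDS_zero_prefix_flip flip).
rewrite exchange_big -[X in (_ <= X)%N]muln1 -[X in (_ <= X * 1)%N]card_ord.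
by rewrite -sum_nat_const; apply: leq_sum => i _; apply: sum_least_in_le1.
Qed.

Lemma sqr_normD_le (R : numFieldType) (t x y : R) : 0 < t ->
  `|x + y| ^+ 2 <= (1 + t) * `|x| ^+ 2 + (1 + t^-1) * `|y| ^+ 2.
Proof.
move=> t_gt0; apply: le_trans (_ : (`|x| + `|y|) ^+ 2 <= _).
  by rewrite !expr2 ler_pM ?ler_normD.
rewrite -subr_ge0.
have -> : (1 + t) * `|x| ^+ 2 + (1 + t^-1) * `|y| ^+ 2 - (`|x| + `|y|) ^+ 2
          = (t * `|x| - `|y|) ^+ 2 / t by field; rewrite gt_eqF.
apply: divr_ge0 (ltW t_gt0).
by rewrite -realEsqr realB ?realM ?normr_real ?(gtr0_real t_gt0).
Qed.

Section Projector.
Variables n c m : nat.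
Local Notation qv := (qvec n c m).

Definition dotq (u v : qv) : C := \sum_k (u k)^* * v k.

Lemma sqnormE (v : qv) : sqnorm v = dotq v v.
Proof. by apply: eq_bigr => k _; rewrite normCKC. Qed.

Lemma sqnorm_ge0 (v : qv) : 0 <= sqnorm v.
Proof. by apply: sumr_ge0 => k _; rewrite exprn_ge0. Qed.

Lemma sqnormD_le (t : C) (u v : qv) : 0 < t ->
  sqnorm (fun k => u k + v k) <= (1 + t) * sqnorm u + (1 + t^-1) * sqnorm v.
Proof.
move=> t_gt0; rewrite /sqnorm !mulr_sumr -big_split /=.
by apply: ler_sum => k _; apply: sqr_normD_le.
Qed.

Lemma sqnorm_subC (u v : qv) :
  sqnorm (fun k => u k - v k) = sqnorm (fun k => v k - u k).
Proof. by apply: eq_bigr => k _; rewrite distrC. Qed.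

Variable P : basis n c m -> basis n c m -> C.
Hypothesis P_proj : is_projector P.

Lemma apply_opB (u v : qv) k :
  apply_op P u k - apply_op P v k = apply_op P (fun j => u j - v j) k.
Proof. by rewrite /apply_op -sumrB; apply: eq_bigr => j _; rewrite mulrBr. Qed.

Lemma dotq_proj (w : qv) :
  dotq (apply_op P w) (apply_op P w) = dotq w (apply_op P w).
Proof.
case: P_proj => P_herm P_idem; rewrite /dotq /apply_op.
under eq_bigr => i _ do rewrite rmorph_sum mulr_suml.
rewrite exchange_big /=; apply: eq_bigr => j _.
transitivity (\sum_i \sum_k (w j)^* * (P j i * P i k * w k)).
  apply: eq_bigr => i _; rewrite mulr_sumr; apply: eq_bigr => k _.
  by rewrite rmorphM /= -(P_herm j i); ring.
rewrite exchange_big /= mulr_sumr; apply: eq_bigr => k _.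
by rewrite -(P_idem j k) mulr_suml mulr_sumr; apply: eq_bigr => i _; ring.
Qed.

(* Pythagoras: [w - P w] is orthogonal to [P w]. *)
Lemma sqnorm_proj_le (w : qv) : sqnorm (apply_op P w) <= sqnorm w.
Proof.
set b := apply_op P w.
have dot_wb : dotq w b = sqnorm b by rewrite sqnormE dotq_proj.
have dot_bw : dotq b w = sqnorm b.
  rewrite -(geC0_conj (sqnorm_ge0 b)) -dot_wb rmorph_sum.
  by apply: eq_bigr => k _; rewrite rmorphM /= conjCK mulrC.
have expand : sqnorm (fun k => w k - b k)
              = sqnorm w - dotq w b - dotq b w + sqnorm b.
  rewrite !sqnormE /dotq -!sumrB -big_split /=.
  by apply: eq_bigr => k _; rewrite rmorphB /=; ring.
by have := sqnorm_ge0 (fun k => w k - b k); rewrite expand dot_wb dot_bw subrK subr_ge0.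
Qed.

Lemma sqnorm_sub_ge_of_accept_gap (u v : qv) :
  2%:R / 3%:R <= sqnorm (apply_op P u) ->
  2%:R / 3%:R <= 1 - sqnorm (apply_op P v) ->
  1 <= 18%:R * sqnorm (fun k => u k - v k).
Proof.
set a := apply_op P u; set b := apply_op P v => accept_u reject_v.
set d := sqnorm (fun k => u k - v k).
set d' := sqnorm (fun k => a k - b k).
have le_d'd : d' <= d.
  have -> : d' = sqnorm (apply_op P (fun j => u j - v j)).
    by apply: eq_bigr => k _; rewrite apply_opB.
  exact: sqnorm_proj_le.
have le_a : sqnorm a <= 4%:R * d' + 4%:R / 3%:R * sqnorm b.
  have -> : sqnorm a = sqnorm (fun k => a k - b k + b k).
    by apply: eq_bigr => k _; rewrite subrK.
  have four : (1 + 3%:R : C) = 4%:R by rewrite addrC natr1.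
  have four_thirds : (1 + 3%:R^-1 : C) = 4%:R / 3%:R by field.
  by rewrite -four -four_thirds sqnormD_le ?ltr0n.
(* [4 d >= 4 d' >= |P u|^2 - 4/3 |P v|^2 >= 2/3 - 4/9], as a linear certificate. *)
rewrite -subr_ge0.
have -> : 18%:R * d - 1 = 18%:R * (d - d')
    + 9%:R / 2%:R * (4%:R * d' + 4%:R / 3%:R * sqnorm b - sqnorm a)
    + 9%:R / 2%:R * (sqnorm a - 2%:R / 3%:R)
    + 6%:R * (1 - sqnorm b - 2%:R / 3%:R) by field.
by rewrite !addr_ge0 // mulr_ge0 ?divr_ge0 ?subr_ge0.
Qed.

End Projector.

Section Hybrid.
Variables n c m : nat.
Local Notation qv := (qvec n c m).

Lemma oracle_basisK (x : input n) : involutive (@oracle_basis n c m x).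
Proof.
by case=> [[Ss bs] w]; congr (_, _, _); apply/ffunP => i; rewrite !ffunE addbK.
Qed.

Lemma oracle_basis_sets (x : input n) (k : basis n c m) :
  (oracle_basis x k).1.1 = k.1.1.
Proof. by case: k => [[Ss bs] w]. Qed.

Lemma sum_sqr_norm_oracle (x : input n) (F : {ffun 'I_c -> {set 'I_n}} -> C)
    (psi : qv) :
  \sum_k F k.1.1 * `|oracle x psi k| ^+ 2 = \sum_k F k.1.1 * `|psi k| ^+ 2.
Proof.
rewrite (reindex_inj (inv_inj (oracle_basisK x))) /=.
by apply: eq_bigr => k _; rewrite oracle_basis_sets /oracle oracle_basisK.
Qed.

Lemma oracle_basis_zero_prefixS (j : 'I_n) (k : basis n c m) :
  ~~ distinguishes k.1.1 j ->
  oracle_basis (zero_prefix n j.+1) k = oracle_basis (zero_prefix n j) k.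
Proof.
case: k => [[Ss bs] w] /= /existsPn same; congr (_, _, _); apply/ffunP => i.
by rewrite !ffunE; move/negPn/eqP: (same i) ->.
Qed.

Definition hybrid_step (psi : qv) (j : 'I_n) : C :=
  sqnorm (fun k => oracle (zero_prefix n j.+1) psi k - oracle (zero_prefix n j) psi k).

Lemma hybrid_step_le (psi : qv) (j : 'I_n) :
  hybrid_step psi j <= 4%:R * \sum_k (distinguishes k.1.1 j)%:R * `|psi k| ^+ 2.
Proof.
pose F (Ss : {ffun 'I_c -> {set 'I_n}}) : C := (distinguishes Ss j)%:R.
pose z1 := zero_prefix n j.+1; pose z0 := zero_prefix n j.
apply: le_trans (_ : _ <= \sum_k (2%:R * (F k.1.1 * `|oracle z1 psi k| ^+ 2)
                              + 2%:R * (F k.1.1 * `|oracle z0 psi k| ^+ 2))) _.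
  apply: ler_sum => k _; rewrite /F /oracle.
  have [_|same] := boolP (distinguishes k.1.1 j); last first.
    rewrite /z1 (oracle_basis_zero_prefixS same) subrr normr0 expr0n /=.
    by rewrite mul0r !mulr0 addr0.
  have := @sqr_normD_le C 1 (psi (oracle_basis z1 k)) (- psi (oracle_basis z0 k)) ltr01.
  by rewrite normrN invr1 !mul1r; apply.
by rewrite big_split /= -!mulr_sumr !sum_sqr_norm_oracle -mulrDl -natrD.
Qed.

Lemma sum_hybrid_step_le (psi : qv) : sqnorm psi = 1 ->
  \sum_(j < n) hybrid_step psi j <= 4%:R * c%:R.
Proof.
move=> psi_unit.
apply: le_trans (ler_sum _ (fun j _ => hybrid_step_le psi j)) _.
rewrite -mulr_sumr ler_wpM2l ?ler0n // exchange_big /=.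
rewrite -[c%:R]mulr1 -[X in _ * X]psi_unit /sqnorm mulr_sumr.
apply: ler_sum => k _; rewrite -mulr_suml ler_wpM2r ?exprn_ge0 //.
by rewrite -natr_sum ler_nat sum_distinguishes_le.
Qed.

End Hybrid.

Lemma computes_OMB_hybrid_step_ge n c m (psi : qvec n c m) P (j : 'I_n) :
  qnaadt_computes (@OMB n) psi P -> 1 <= 18%:R * hybrid_step psi j.
Proof.
case=> _ [P_proj correct]; rewrite /hybrid_step.
have := correct (zero_prefix n j); have := correct (zero_prefix n j.+1).
rewrite /accept_prob !OMB_zero_prefix ?(ltnW (ltn_ord j)) //=.
case: (odd j) => /= [reject_next accept_cur|accept_next reject_cur].
  by rewrite sqnorm_subC; apply: (sqnorm_sub_ge_of_accept_gap P_proj).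
exact: (sqnorm_sub_ge_of_accept_gap P_proj).
Qed.

Theorem theorem4p2 :
  exists eps : rat, 0 < eps /\
    forall (n : nat), (0 < n)%N ->
      forall c : nat, QNAADT_le (@OMB n) c -> eps * n%:R <= c%:R.
Proof.
exists 72%:R^-1; split=> [|n _ c [m [psi [P computes]]]].
  by rewrite invr_gt0 ltr0n.
suff le_n_72c : (n%:R : C) <= 72%:R * c%:R.
  by rewrite mulrC ler_pdivrMr ?ltr0n // -natrM ler_nat mulnC -(ler_nat C) natrM.
have [psi_unit _] := computes.
apply: le_trans (_ : _ <= 18%:R * \sum_(j < n) hybrid_step psi j) _.
  have -> : (n%:R : C) = \sum_(j < n) 1 by rewrite sumr_const card_ord.
  rewrite mulr_sumr.
  by apply: ler_sum => j _; apply: computes_OMB_hybrid_step_ge computes.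
apply: le_trans (ler_wpM2l (ler0n _ _) (sum_hybrid_step_le psi_unit)) _.
by rewrite mulrA -(natrM _ 18 4).
Qed.
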